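(* Let $R$ be a commutative ring with nonzero identity, $\delta$ an expansion of ideals of $R$, and $I$ a proper ideal of $R$ with $\delta(I)\neq R$. If $I$ is a $\delta$-$n$-ideal of $R$, then $I\subseteq\sqrt{0}$.
   Context: An expansion of ideals of a ring $R$ is a map $\delta$ from the set of ideals of $R$ to itself such that $I\subseteq\delta(I)$ for every ideal $I$, and $\delta(I)\subseteq\delta(J)$ whenever $I\subseteq J$. $\sqrt{0}$ denotes the nilradical of $R$. Given an expansion $\delta$, a proper ideal $I$ of $R$ is a $\delta$-$n$-ideal if whenever $a,b\in R$ with $ab\in I$ and $a\notin\sqrt{0}$, then $b\in\delta(I)$. *)

From mathcomp Require Import all_boot all_algebra.
Set Implicit Arguments. Unset Strict Implicit. Unset Printing Implicit Defensive.
Import GRing.Theory.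
Local Open Scope ring_scope.

Definition is_ideal_of (R : comNzRingType) (I : R -> Prop) : Prop :=
  [/\ I 0, (forall x y, I x -> I y -> I (x + y)) & (forall a x, I x -> I (a * x))].

Definition proper_ideal_of (R : comNzRingType) (I : R -> Prop) : Prop :=
  is_ideal_of I /\ exists x, ~ I x.

Definition nilradical (R : comNzRingType) (x : R) : Prop := exists n : nat, x ^+ n = 0.

Definition expansion (R : comNzRingType) (delta : (R -> Prop) -> (R -> Prop)) : Prop :=
  [/\ (forall I, is_ideal_of I -> is_ideal_of (delta I)),
      (forall I, is_ideal_of I -> forall x, I x -> delta I x) &
      (forall I J, is_ideal_of I -> is_ideal_of J -> (forall x, I x -> J x) ->
         forall x, delta I x -> delta J x)].

Definition delta_n_ideal (R : comNzRingType) (delta : (R -> Prop) -> (R -> Prop))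
  (I : R -> Prop) : Prop :=
  proper_ideal_of I /\
  forall a b : R, I (a * b) -> ~ nilradical a -> delta I b.

From mathcomp Require Import all_boot all_algebra.
From Stdlib Require Import Classical.
Import GRing.Theory.
Local Open Scope ring_scope.

Lemma delta_n_ideal_full {R : comNzRingType} {delta : (R -> Prop) -> (R -> Prop)}
    {I : R -> Prop} {a : R} :
  delta_n_ideal delta I -> I a -> ~ nilradical a -> forall b, delta I b.
Proof.
move=> [[[_ _ I_mul] _] n_ideal] Ia a_nnil b.
by apply: (n_ideal a b) => //; rewrite mulrC; apply: I_mul.
Qed.

Theorem proposition2p3 (R : comNzRingType) (delta : (R -> Prop) -> (R -> Prop))
  (I : R -> Prop) :
  expansion delta -> proper_ideal_of I -> (exists x, ~ delta I x) ->
  delta_n_ideal delta I -> forall x, I x -> nilradical x.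
Proof.
move=> _ _ [b not_delta_b] n_ideal x Ix.
apply: NNPP => x_nnil; apply: not_delta_b.
exact: (delta_n_ideal_full n_ideal Ix x_nnil).
Qed.
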